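(* Let $X$ be an orthomodular lattice. The set $\mathrm{End}(X)=\mathbf{OMLatGal}(X,X)$, with composition in $\mathbf{OMLatGal}$ as multiplication, the identity as unit, the dagger $(s_*,s^* )^\dagger=(s^*,s_* )$ as involution, and $[s]=\ker(s)\circ\ker(s)^\dagger$, is a Foulis semigroup. Explicitly, for $s\in\mathrm{End}(X)$ and $x\in X$, $[s]_*(x)=[s]^*(x)=s^*(1)^\perp\vee(s^*(1)\wedge x^\perp)$, i.e. $[s]_*(x)=s^*(1)\supset x^\perp=(x\,\&\,s^*(1))^\perp$, where $a\supset b=a^\perp\vee(a\wedge b)$ and $a\,\&\,b=b\wedge(b^\perp\vee a)$.
   Context: An orthomodular lattice is a bounded lattice with an order-reversing involution $x\mapsto x^\perp$ such that $x\wedge x^\perp=0$, $x\vee x^\perp=1$, and $x\le y$ implies $y=x\vee(x^\perp\wedge y)$. $\mathbf{OMLatGal}$: objects orthomodular lattices; morphisms $f:X\to Y$ are pairs $(f_*,f^* )$ of order-reversing maps $f_*:X\to Y$, $f^*:Y\to X$ with $y\le f_*(x)\iff x\le f^*(y)$; identity has both components $x\mapsto x^\perp$; $(g\circ f)_*=g_*\circ\perp\circ f_*$, $(g\circ f)^*=f^*\circ\perp\circ g^*$; dagger $(f_*,f^* )^\dagger=(f^*,f_* )$. It is a dagger kernel category whose kernel of $f$ is the morphism $k:\downarrow k\to X$ with $k=f^*(1)$, where $\downarrow a=\{u\le a\}$ with complement $a\wedge u^\perp$ and $a_*(u)=u^\perp$, $a^*(x)=a\wedge x^\perp$. A Foulis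 semigroup is a monoid $(S,\cdot,1)$ with maps $(-)^\dagger:S\to S$ and $[-]:S\to S$ such that: (1) $1^\dagger=1$, $(s\cdot t)^\dagger=t^\dagger\cdot s^\dagger$, $s^{\dagger\dagger}=s$; (2) $[s]\cdot[s]=[s]=[s]^\dagger$; (3) $0:=[1]$ satisfies $0\cdot s=0=s\cdot 0$ for all $s$; (4) for all $s,x$: $s\cdot x=0$ iff $x=[s]\cdot y$ for some $y\in S$. *)

From HB Require Import structures.
From mathcomp Require Import all_boot all_order.
Set Implicit Arguments.
Unset Strict Implicit.
Unset Printing Implicit Defensive.
Import Order.TTheory.
Local Open Scope order_scope.

Definition galois {A B : Type} (leA : rel A) (leB : rel B)
  (lo : A -> B) (up : B -> A) : Prop :=
  [/\ (forall x x', leA x x' -> leB (lo x') (lo x)),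
      (forall y y', leB y y' -> leA (up y') (up y)) &
      (forall x y, leB y (lo x) = leA x (up y))].

(* Composition g o f in OMLatGal, where p is the orthocomplement of the
   middle object:  (g o f)_* = g_* o p o f_*,  (g o f)^* = f^* o p o g^*. *)
Definition comp_lo {A B C : Type} (p : B -> B) (gl : B -> C) (fl : A -> B) :=
  fun a => gl (p (fl a)).
Definition comp_up {A B C : Type} (p : B -> B) (fu : B -> A) (gu : C -> B) :=
  fun c => fu (p (gu c)).

Lemma galois_comp {A B C : Type} (leA : rel A) (leB : rel B) (leC : rel C)
  (p : B -> B) (pa : forall b b', leB b b' -> leB (p b') (p b))
  (pi : involutive p) fl fu gl gu :
  galois leA leB fl fu -> galois leB leC gl gu ->
  galois leA leC (comp_lo p gl fl) (comp_up p fu gu).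
Proof.
move=> [f1 f2 f3] [g1 g2 g3]; split; rewrite /comp_lo /comp_up.
- by move=> x x' h; apply: g1; apply: pa; apply: f1.
- by move=> y y' h; apply: f2; apply: pa; apply: g2.
- move=> x y; rewrite g3 -f3.
  by apply/idP/idP => /pa; rewrite pi.
Qed.

Lemma galois_dagger {A : Type} (leA : rel A) (lo up : A -> A) :
  galois leA leA lo up -> galois leA leA up lo.
Proof. by move=> [h1 h2 h3]; split => // x y; rewrite h3. Qed.

Section OML.
Context {d : Order.disp_t} (X : tbLatticeType d).

Definition is_oml (perp : X -> X) : Prop :=
  [/\ (forall x y, x <= y -> perp y <= perp x),
      (forall x, perp (perp x) = x),
      (forall x, x `&` perp x = \bot),
      (forall x, x `|` perp x = \top) &
      (forall x y, x <= y -> y = x `|` (perp x `&` y))].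

Definition sasaki_impl (perp : X -> X) (a b : X) : X := perp a `|` (a `&` b).
Definition andthen (perp : X -> X) (a b : X) : X := b `&` (perp b `|` a).

Record endo := Endo {
  elo : X -> X;
  eup : X -> X;
  egal : galois <=%O <=%O elo eup }.

Definition edag (s : endo) : endo := Endo (galois_dagger (egal s)).

Section WithPerp.
Variable perp : X -> X.
Hypothesis HX : is_oml perp.

Lemma perp_anti x y : x <= y -> perp y <= perp x.
Proof. by move=> hxy; case: HX => h _ _ _ _; exact: h hxy. Qed.
Lemma perpK : involutive perp.
Proof. by case: HX => _ h _ _ _. Qed.

Lemma perp_swap x y : (x <= perp y) = (y <= perp x).
Proof. by apply/idP/idP => /perp_anti; rewrite perpK. Qed.

Lemma galois_id : galois <=%O <=%O perp perp.
Proof. rewrite /galois; split; [exact: perp_anti|exact: perp_anti|move=> x y; exact: perp_swap]. Qed.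

Definition eid : endo := Endo galois_id.

Definition emul (s t : endo) : endo :=
  Endo (galois_comp perp_anti perpK (egal t) (egal s)).

(* ---- kernel of s : the morphism  ker s : (down k) -> X, k = s^*(1) ---- *)
Section Kernel.
Variable s : endo.
Definition kerel : X := eup s \top.
Definition downset := {u : X | u <= kerel}.
Definition le_down : rel downset := fun u v => val u <= val v.
Definition ker_lo (u : downset) : X := perp (val u).
Definition ker_up (x : X) : downset :=
  exist (fun u => u <= kerel) (kerel `&` perp x) (leIl _ _).
(* orthocomplement of down k : u |-> k /\ u^perp *)
Definition down_perp (u : downset) : downset := ker_up (val u).

Lemma perpI a b : perp (a `&` b) = perp a `|` perp b.
Proof.
apply: le_anti; apply/andP; split; last first.
  by rewrite leUx !perp_anti ?leIl ?leIr.
rewrite -[X in _ <= X]perpK; apply: perp_anti; rewrite lexI; apply/andP; split.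
  by rewrite -{2}(perpK a); apply: perp_anti; rewrite leUl.
by rewrite -{2}(perpK b); apply: perp_anti; rewrite leUr.
Qed.

Lemma perpU a b : perp (a `|` b) = perp a `&` perp b.
Proof. by rewrite -{1}(perpK a) -{1}(perpK b) -perpI perpK. Qed.

Lemma ker_up_anti x x' : x <= x' -> le_down (ker_up x') (ker_up x).
Proof.
move=> h; rewrite /le_down /= lexI leIl /=.
by apply: le_trans (leIr _ _) (perp_anti h).
Qed.

Lemma galois_ker : galois le_down <=%O ker_lo ker_up.
Proof.
split.
- by move=> u u' h; apply: perp_anti.
- by move=> y y'; apply: ker_up_anti.
- move=> [u hu] y; rewrite /le_down /ker_lo /= lexI hu /=.
  by rewrite perp_swap.
Qed.

Lemma down_perp_anti u u' : le_down u u' -> le_down (down_perp u') (down_perp u).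
Proof. exact: ker_up_anti. Qed.

Lemma down_perpK : involutive down_perp.
Proof.
move=> [u hu]; apply: val_inj => /=.
rewrite perpI perpK.
have : perp u = perp kerel `|` (perp (perp kerel) `&` perp u).
  by case: HX => _ _ _ _; apply; apply: perp_anti.
move/(congr1 perp); rewrite perpK perpU perpK perpI perpK; by move=> <-.

Qed.

Definition ker_dag_gal : galois <=%O le_down ker_up ker_lo :=
  let: And3 a b c := galois_ker in And3 b a (fun x y => esym (c y x)).

End Kernel.

(* [s] = ker(s) o ker(s)^dagger, composed through the object down k *)
Definition ebr (s : endo) : endo :=
  Endo (galois_comp (@down_perp_anti s) (@down_perpK s)
          (ker_dag_gal s) (galois_ker s)).

End WithPerp.
End OML.

Definition foulis_semigroup (S : Type) (mul : S -> S -> S) (one : S)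
  (dag : S -> S) (br : S -> S) : Prop :=
  [/\ associative mul /\ left_id one mul /\ right_id one mul,
      dag one = one /\ (forall s t, dag (mul s t) = mul (dag t) (dag s))
        /\ involutive dag,
      (forall s, mul (br s) (br s) = br s /\ br s = dag (br s)),
      (forall s, mul (br one) s = br one /\ mul s (br one) = br one) &
      (forall s x, mul s x = br one <-> exists y, x = mul (br s) y)].

From HB Require Import structures.
From mathcomp Require Import all_boot all_order.
From Stdlib Require Import ProofIrrelevance FunctionalExtensionality.
Import Order.TTheory.
Local Open Scope order_scope.

(* Write k := s^*(1) for the kernel element of an endomorphism s.  Since an upper adjoint is determined by its lower adjoint, two
   endomorphisms are equal as soon as their lower components agree; every axiom
   is therefore checked on lower components:
   - the monoid and dagger laws hold definitionally, up to x^perp^perp = x;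
   - [s]_* takes values above k^perp, where [s]_* o perp is the identity by
     the orthomodular law, so [s] is idempotent; it is self-adjoint because
     its two components coincide;
   - 0 = [1] has constant lower component 1, so it is absorbing (s_*(0) = 1);
   - s.x = 0 holds iff every x_*(a) lies above k^perp, and on such elements
     [s]_* o perp is the identity (orthomodular law); this yields the kernel
     axiom s.x = 0 <-> x = [s].y with the witness y = x. *)

Lemma galois_up_unique {d : Order.disp_t} {A : porderType d} {B : Type}
    {leB : rel B} {lo : A -> B} {up1 up2 : B -> A} :
  galois <=%O leB lo up1 -> galois <=%O leB lo up2 -> up1 =1 up2.
Proof.
move=> [_ _ g1] [_ _ g2] y; apply: le_anti.
by rewrite -g2 -[X in _ && X]g1 g1 g2 !lexx.
Qed.

Lemma galois_lo_bot {d d' : Order.disp_t} {A : bPOrderType d}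
    {B : tPOrderType d'} {lo : A -> B} {up : B -> A} :
  galois <=%O <=%O lo up -> lo \bot = \top.
Proof. by move=> [_ _ g]; apply/eqP; rewrite eq_le lex1 g le0x. Qed.

Lemma galois_lo_top {d d' : Order.disp_t} {A : porderType d}
    {B : tPOrderType d'} {lo : A -> B} {up : B -> A} (a : A) :
  galois <=%O <=%O lo up -> (lo a = \top) <-> (a <= up \top).
Proof.
move=> [_ _ g]; rewrite -g; split => [-> // | h].
by apply/eqP; rewrite eq_le lex1.
Qed.

Section Foulis.
Context {d : Order.disp_t} {X : tbLatticeType d} {perp : X -> X}
  (HX : is_oml perp).

Local Notation ezero := (ebr HX (eid HX)).

Lemma endo_ext (s t : endo X) : elo s =1 elo t -> s = t.
Proof.
case: s t => [ls us gs] [lt ut gt] /= /functional_extensionality el.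
subst lt; have eu : us = ut.
  exact: functional_extensionality (galois_up_unique gs gt).
by subst ut; congr Endo; apply: proof_irrelevance.
Qed.

Lemma perpT : perp \top = \bot.
Proof. by case: HX => _ _ h _ _; rewrite -(h \top) meet1x. Qed.

Lemma oml_law a b : a <= b -> b = a `|` (perp a `&` b).
Proof. by case: HX => _ _ _ _; apply. Qed.

Lemma perp_andthen a b :
  perp (andthen perp a b) = sasaki_impl perp b (perp a).
Proof. by rewrite /andthen (perpI HX) (perpU HX) (perpK HX). Qed.

Lemma ebr_lo s x :
  elo (ebr HX s) x = perp (eup s \top) `|` (eup s \top `&` perp x).
Proof.
by rewrite /= /comp_lo /ker_lo /down_perp /ker_up /kerel /= (perpI HX) (perpK HX).
Qed.

Lemma ebr_up s x :
  eup (ebr HX s) x = perp (eup s \top) `|` (eup s \top `&` perp x).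
Proof.
by rewrite /= /comp_up /ker_lo /down_perp /ker_up /kerel /= (perpI HX) (perpK HX).
Qed.

Lemma ebr_fix s b : perp (eup s \top) <= b -> elo (ebr HX s) (perp b) = b.
Proof.
move=> /oml_law hb; rewrite ebr_lo (perpK HX).
by rewrite [in RHS]hb (perpK HX).
Qed.

Lemma emul_lo s t a : elo (emul HX s t) a = elo s (perp (elo t a)).
Proof. by []. Qed.

Lemma emul_assoc : associative (emul HX).
Proof. by move=> s t u; apply: endo_ext. Qed.

Lemma emul1s : left_id (eid HX) (emul HX).
Proof. by move=> s; apply: endo_ext => a; rewrite emul_lo /= (perpK HX). Qed.

Lemma emuls1 : right_id (eid HX) (emul HX).
Proof. by move=> s; apply: endo_ext => a; rewrite emul_lo /= (perpK HX). Qed.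

(* The dagger swaps the two components, so its laws hold definitionally. *)
Lemma edag_id : edag (eid HX) = eid HX.
Proof. exact: endo_ext. Qed.

Lemma edag_mul s t : edag (emul HX s t) = emul HX (edag t) (edag s).
Proof. exact: endo_ext. Qed.

Lemma edagK : involutive (@edag d X).
Proof. by move=> s; apply: endo_ext. Qed.

Lemma ebr_idem s : emul HX (ebr HX s) (ebr HX s) = ebr HX s.
Proof.
apply: endo_ext => a; rewrite emul_lo.
by apply: ebr_fix; rewrite ebr_lo leUl.
Qed.

Lemma ebr_selfadjoint s : ebr HX s = edag (ebr HX s).
Proof.
apply: endo_ext => a; change (elo (ebr HX s) a = eup (ebr HX s) a).
by rewrite ebr_lo ebr_up.
Qed.

Lemma ezero_lo a : elo ezero a = \top.
Proof. by rewrite ebr_lo /= (perpK HX) join1x. Qed.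

(* 0 is absorbing on the left, and on the right since s_*(0) = 1. *)
Lemma ezero_mull s : emul HX ezero s = ezero.
Proof. by apply: endo_ext => a; rewrite emul_lo !ezero_lo. Qed.

Lemma ezero_mulr s : emul HX s ezero = ezero.
Proof.
apply: endo_ext => a; rewrite emul_lo !ezero_lo perpT.
exact: galois_lo_bot (egal s).
Qed.

Lemma emul_eq_zero s x :
  emul HX s x = ezero <-> forall a, perp (eup s \top) <= elo x a.
Proof.
have pointwise a : elo s (perp (elo x a)) = \top <-> perp (eup s \top) <= elo x a.
  apply: iff_trans (galois_lo_top _ (egal s)) _.
  by rewrite -{1}(perpK HX (eup s \top)) (perp_swap HX) (perpK HX).
split => [h a | h].
  by apply/pointwise; have := congr1 (fun e => elo e a) h; rewrite emul_lo ezero_lo.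
by apply: endo_ext => a; rewrite emul_lo ezero_lo; apply/pointwise.
Qed.

(* The Foulis kernel axiom: s.x = 0 iff x factors through [s] (take y = x). *)
Lemma ebr_kernel s x :
  emul HX s x = ezero <-> exists y, x = emul HX (ebr HX s) y.
Proof.
apply: iff_trans (emul_eq_zero s x) _; split => [h | [y ->] a].
  by exists x; apply: endo_ext => a; rewrite emul_lo ebr_fix.
by rewrite emul_lo ebr_lo leUl.
Qed.

End Foulis.

Theorem mainTheorem15 (d : Order.disp_t) (X : tbLatticeType d)
  (perp : X -> X) (HX : is_oml perp) :
  foulis_semigroup (emul HX) (eid HX) (@edag d X) (ebr HX) /\
  (forall (s : endo X) (x : X),
     [/\ elo (ebr HX s) x = perp (eup s \top) `|` (eup s \top `&` perp x),
         eup (ebr HX s) x = perp (eup s \top) `|` (eup s \top `&` perp x),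
         elo (ebr HX s) x = sasaki_impl perp (eup s \top) (perp x) &
         elo (ebr HX s) x = perp (andthen perp x (eup s \top))]).
Proof.
split; last first.
  by move=> s x; rewrite (perp_andthen HX) (ebr_up HX) (ebr_lo HX).
split.
- by split; [exact: emul_assoc | split; [exact: emul1s | exact: emuls1]].
- by split; [exact: edag_id | split; [exact: edag_mul | exact: edagK]].
- by move=> s; split; [exact: ebr_idem | exact: ebr_selfadjoint].
- by move=> s; split; [exact: ezero_mull | exact: ezero_mulr].
- exact: ebr_kernel.
Qed.
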